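(* Let $s\in\{0,\tfrac12\}$, $\lambda\in\mathbb{C}$ and $\sigma\in\mathrm{Aut}(\mathfrak{L}^s_\lambda)$. Then there exist $\tau\in\mathfrak{I}$, $\epsilon\in\{1,-1\}$, $\alpha,\mu\in\mathbb{C}\setminus\{0\}$ and $\beta\in\mathbb{C}$ such that for all $m\in\mathbb{Z}$, $$(\sigma\tau)(L_m)=\epsilon\alpha^mL_{\epsilon m}+m\alpha^m\beta\, I_{\epsilon m},\qquad (\sigma\tau)(I_m)=\alpha^m\mu\, I_{\epsilon m}.$$
   Context: For $s\in\{0,\tfrac12\}$ and $\lambda\in\mathbb{C}$, $\mathfrak{L}^s_\lambda$ is the complex Lie superalgebra with basis $\{L_m,I_m,G_p,H_p : m\in\mathbb{Z},\ p\in s+\mathbb{Z}\}$, even part spanned by the $L_m,I_m$, odd part spanned by the $G_p,H_p$, with brackets $[L_m,L_n]=(m-n)L_{m+n}$, $[L_m,I_n]=(m-n)I_{m+n}$, $[L_m,H_p]=(\tfrac m2-p)H_{m+p}$, $[L_m,G_p]=(\tfrac m2-p)G_{m+p}+\lambda(m+1)H_{m+p}$, $[I_m,G_p]=(m-2p)H_{m+p}$, $[G_p,G_q]=I_{p+q}$, plus super-antisymmetry; all other brackets of basis elements are zero. $\mathrm{Aut}(\mathfrak{L})$ is the group of bijective parity-preserving linear maps $\sigma$ with $\sigma([x,y])=[\sigma(x),\sigma(y)]$. $\mathfrak{I}$ is the subgroup of $\mathrm{Aut}(\mathfrak{L})$ generated by the maps $\exp(\alpha\,\mathrm{ad}\,I_k)=\mathrm{id}+\alpha\,\mathrm{ad}\,I_k$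 ($\alpha\in\mathbb{C}$, $k\in\mathbb{Z}$), where $\mathrm{ad}\,x(y)=[x,y]$. *)

From HB Require Import structures.
From mathcomp Require Import all_boot all_order all_algebra.
Set Implicit Arguments. Unset Strict Implicit. Unset Printing Implicit Defensive.
Import Order.TTheory GRing.Theory Num.Theory.
Local Open Scope ring_scope.

(* Basis of L^s_lambda.  For the odd generators G_p, H_p with p in s + Z we
   store the integer q with p = q + s (s = 1/2 iff [half] is true). *)
Inductive basis := bL of int | bI of int | bG of int | bH of int.

Definition basis_enc (b : basis) : nat * int :=
  match b with bL m => (0%N, m) | bI m => (1%N, m) | bG q => (2%N, q) | bH q => (3%N, q) end.
Definition basis_dec (x : nat * int) : option basis :=
  match x with
  | (0%N, m) => Some (bL m) | (1%N, m) => Some (bI m)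
  | (2%N, q) => Some (bG q) | (3%N, q) => Some (bH q) | _ => None end.
Lemma basis_encK : pcancel basis_enc basis_dec. Proof. by case. Qed.
HB.instance Definition _ := Equality.copy basis (pcan_type basis_encK).

Definition parity (b : basis) : bool :=
  match b with bL _ | bI _ => false | bG _ | bH _ => true end.

(* An element of the algebra is a finite formal linear combination of basis
   vectors; two such are equal iff they have the same coefficients [coef]. *)
Definition elt (C : Type) := seq (C * basis).

Section Alg.
Variable C : numClosedFieldType.
Variable half : bool.
Variable lam : C.

Definition coef (x : elt C) (b : basis) : C := \sum_(t <- x | t.2 == b) t.1.
Definition scale (a : C) (x : elt C) : elt C := [seq (a * t.1, t.2) | t <- x].

Definition sC : C := if half then 2^-1 else 0.
Definition pval (q : int) : C := q%:~R + sC.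
Definition sI : int := if half then 1 else 0.          (* 2s *)

(* bracket of basis elements (super-antisymmetry built in) *)
Definition br (x y : basis) : elt C :=
  match x, y with
  | bL m, bL n => [:: ((m - n)%:~R, bL (m + n))]
  | bL m, bI n => [:: ((m - n)%:~R, bI (m + n))]
  | bI n, bL m => [:: (- (m - n)%:~R, bI (m + n))]
  | bL m, bH q => [:: (m%:~R / 2%:R - pval q, bH (m + q))]
  | bH q, bL m => [:: (- (m%:~R / 2%:R - pval q), bH (m + q))]
  | bL m, bG q => [:: (m%:~R / 2%:R - pval q, bG (m + q));
                     (lam * (m + 1)%:~R, bH (m + q))]
  | bG q, bL m => [:: (- (m%:~R / 2%:R - pval q), bG (m + q));
                     (- (lam * (m + 1)%:~R), bH (m + q))]
  | bI m, bG q => [:: (m%:~R - 2%:R * pval q, bH (m + q))]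
  | bG q, bI m => [:: (- (m%:~R - 2%:R * pval q), bH (m + q))]
  | bG p, bG q => [:: (1, bI (p + q + sI))]
  | _, _ => [::]
  end.

Definition brx (x y : elt C) : elt C :=
  flatten [seq scale (t.1 * u.1) (br t.2 u.2) | t <- x, u <- y].

Definition ext (f : basis -> elt C) (x : elt C) : elt C :=
  flatten [seq scale t.1 (f t.2) | t <- x].

(* sig : basis -> elt C describes the linear map sending each basis vector b
   to sig b.  It is an automorphism of the Lie superalgebra iff it is
   parity-preserving, bracket-preserving and bijective. *)
Definition is_aut (sig : basis -> elt C) : Prop :=
  [/\ (forall b b', coef (sig b) b' != 0 -> parity b' = parity b),
      (forall x y : elt C, coef (ext sig (brx x y)) =1 coef (brx (ext sig x) (ext sig y))),
      (forall x y : elt C, coef (ext sig x) =1 coef (ext sig y) -> coef x =1 coef y) &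
      (forall y : elt C, exists x : elt C, coef (ext sig x) =1 coef y)].

(* exp(a ad I_k) = id + a ad I_k on basis vectors *)
Definition expadI (a : C) (k : int) (b : basis) : elt C :=
  (1, b) :: scale a (br (bI k) b).

(* elements of the group generated by the exp(a ad I_k): finite compositions *)
Definition Iact (tau : seq (C * int)) (x : elt C) : elt C :=
  foldr (fun t acc => ext (expadI t.1 t.2) acc) x tau.

End Alg.

From HB Require Import structures.
From mathcomp Require Import all_boot all_order all_algebra.
From mathcomp Require Import zify ring.
Import Order.TTheory GRing.Theory Num.Theory.
Local Open Scope ring_scope.
Set Implicit Arguments. Unset Strict Implicit. Unset Printing Implicit Defensive.

(* The I_n are brackets [G_p, G_q] of odd elements, so sigma maps them into
   the span of the I's.  As ad L_0 multiplies L_m and I_m by -m, ad sigma(L_0)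
   does the same to sigma(L_m) and sigma(I_m); comparing extreme L-degrees and
   using surjectivity shows that the only L-component of sigma(L_0) is u L_0,
   after which the L-part of sigma(L_m) is supported on the j with u j = m.
   Hence u = eps = +-1 and sigma(L_m) has L-part on L_(eps m) alone.  The
   relations [L_m, L_n] = (m - n) L_(m+n) and [L_m, I_n] = (m - n) I_(m+n)
   give Cauchy-type equations for the diagonal coefficients, holding for
   m <> n only but still forcing eps alpha^m, alpha^m mu and m alpha^m beta.
   The remaining I-components of sigma(L_m) are determined by those of
   sigma(L_0), and the finitely many exp(c_k ad I_k) making up tau are chosen
   to cancel them. *)

Lemma big_uniq_point (R : nmodType) (T : eqType) (s : seq T) (f : T -> R) t0 :
  uniq s -> (forall t, t != t0 -> f t = 0) ->
  \sum_(t <- s) f t = if t0 \in s then f t0 else 0.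
Proof.
move=> us f0; case: ifP => [t0s|t0s]; first by rewrite (bigD1_seq t0) //= big1 ?addr0.
by rewrite big_seq big1 // => t ts; apply: f0; apply: contraFneq t0s => <-.
Qed.

Lemma sum_neq0_exists (R : nmodType) (T : eqType) (s : seq T) (f : T -> R) :
  \sum_(t <- s) f t != 0 -> exists2 t, t \in s & f t != 0.
Proof.
move=> sum_neq0; apply/hasP; apply: contraNT sum_neq0 => /hasPn f0.
by rewrite big_seq big1 // => t /f0 /negPn /eqP.
Qed.

Lemma int_ind_succ (P : int -> Prop) :
  P 0 -> (forall m, P m <-> P (m + 1)) -> forall m, P m.
Proof.
move=> P0 PS; elim/int_rect => [//|n Pn|n Pn].
  by rewrite intS addrC; apply/(PS n).
by apply/(PS (- n.+1%:Z)); rewrite intS opprD addrAC addNr add0r.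
Qed.

Lemma exists_argmax_seq (T : eqType) (s : seq T) (P : pred T) (f : T -> int) :
  has P s -> exists2 k, P k & forall b, b \in s -> P b -> f b <= f k.
Proof.
elim: s => [//|x s IH] /=; have [Px _|nPx /= sP] := boolP (P x); last first.
  have [k Pk kmax] := IH sP; exists k => // b.
  by rewrite in_cons => /orP[/eqP->|]; [rewrite (negbTE nPx) | exact: kmax].
have [sP|/hasPn nsP] := boolP (has P s); last first.
  exists x => // b; rewrite in_cons => /orP[/eqP->//|bs Pb].
  by have := nsP b bs; rewrite Pb.
have [k Pk kmax] := IH sP; have [le_xk|le_kx] := lerP (f x) (f k).
  by exists k => // b; rewrite in_cons => /orP[/eqP->//|]; exact: kmax.
exists x => // b; rewrite in_cons => /orP[/eqP->//|bs Pb].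
exact: le_trans (kmax b bs Pb) (ltW le_kx).
Qed.

Section FieldEquations.
Variable F : fieldType.

Lemma mul_offdiag_expz (w : int -> F) :
  (forall m n, m != n -> w (m + n) = w m * w n) -> (forall m, w m != 0) ->
  forall m, w m = w 1 ^ m.
Proof.
move=> wD w_neq0; set a := w 1.
have w0 : w 0 = 1.
  by apply: (mulfI (w_neq0 1)); rewrite mulr1 -wD.
have wN1 : w (-1) * a = 1 by rewrite -wD // addNr.
have w2 : w 2 = a * a.
  by rewrite -[LHS]mulr1 -wN1 mulrA -wD.
have wS m : w (m + 1) = w m * a.
  by have [->|m1] := eqVneq m 1; [rewrite w2 | rewrite wD].
apply: int_ind_succ => [|m]; first by rewrite w0 expr0z.
rewrite wS expfzDr ?expr1z ?w_neq0 //; split => [->//|]; exact: (mulIf (w_neq0 1)).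
Qed.

Lemma add_offdiag_linear (e : int -> F) :
  (forall m n, m != n -> e (m + n) = e m + e n) -> forall m, e m = m%:~R * e 1.
Proof.
move=> eD.
have e0 : e 0 = 0 by apply: (addrI (e 1)); rewrite -eD // !addr0.
have eN1 : e (-1) = - e 1.
  by apply/eqP; rewrite -addr_eq0 -eD // addNr e0.
have e2 : e 2 = e 1 + e 1.
  by have := eD 2 (-1) isT; rewrite eN1 [2 + -1](_ : _ = 1) // => /esym/eqP; rewrite subr_eq => /eqP.
have eS m : e (m + 1) = e m + e 1.
  by have [->|m1] := eqVneq m 1; [rewrite e2 | rewrite eD].
apply: int_ind_succ => [|m]; first by rewrite e0 mul0r.
rewrite eS intrD mulrDl mul1r; split => [->//|]; exact: addIr.
Qed.

Lemma eigen_eq_cancel (u a : F) (j m : int) :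
  a != 0 -> u * a * (- j)%:~R = (- m)%:~R * a -> u * j%:~R = m%:~R.
Proof. by move=> a_neq0; rewrite !intrN mulrN mulNr mulrAC => /oppr_inj/(mulIf a_neq0). Qed.

End FieldEquations.

Section Coefficients.
Variable C : numClosedFieldType.

Lemma eq_bL (a b : int) : (bL a == bL b) = (a == b).
Proof. by apply/eqP/eqP => [[]|->]. Qed.
Lemma eq_bI (a b : int) : (bI a == bI b) = (a == b).
Proof. by apply/eqP/eqP => [[]|->]. Qed.

Lemma coef_elt_nil b : coef (C:=C) [::] b = 0.
Proof. by rewrite /coef big_nil. Qed.

Lemma coef_elt_cons (a : C) b' x b :
  coef ((a, b') :: x) b = (if b' == b then a else 0) + coef x b.
Proof. by rewrite /coef big_cons /=; case: (b' == b); rewrite ?add0r. Qed.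

Lemma coef_elt_cat (x y : elt C) b : coef (x ++ y) b = coef x b + coef y b.
Proof. by rewrite /coef big_cat. Qed.

Lemma coef_scale (a : C) x b : coef (scale a x) b = a * coef x b.
Proof.
elim: x => [|[c b'] x IH]; first by rewrite /scale /= !coef_elt_nil mulr0.
rewrite /scale /= coef_elt_cons -/(scale a x) IH coef_elt_cons mulrDr.
by case: (b' == b); rewrite ?mulr0.
Qed.

Lemma coef_flatten (l : seq (elt C)) b : coef (flatten l) b = \sum_(x <- l) coef x b.
Proof.
elim: l => [|x l IH]; first by rewrite big_nil coef_elt_nil.
by rewrite /= coef_elt_cat IH big_cons.
Qed.

Lemma coef_ext f (x : elt C) b :
  coef (ext f x) b = \sum_(t <- x) t.1 * coef (f t.2) b.
Proof. by rewrite /ext coef_flatten big_map; apply: eq_bigr => t _; rewrite coef_scale. Qed.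

Lemma coef_brx half (lam : C) (x y : elt C) b :
  coef (brx half lam x y) b =
  \sum_(t <- x) \sum_(u <- y) t.1 * u.1 * coef (br half lam t.2 u.2) b.
Proof.
rewrite /brx coef_flatten.
elim: x => [|t x IH]; first by rewrite !big_nil.
rewrite /= big_cat big_cons IH; congr (_ + _).
by rewrite big_map; apply: eq_bigr => u _; rewrite coef_scale.
Qed.

Definition supp (x : elt C) := undup (map snd x).

Definition supported (X : basis -> C) (s : seq basis) := forall b, X b != 0 -> b \in s.

Lemma supported_supp x : supported (coef x) (supp x).
Proof.
move=> b; rewrite /coef mem_undup; apply: contraR => /mapP bx.
rewrite big_seq_cond big1 // => t /andP[tx /eqP tb].
by case: bx; exists t.
Qed.

Lemma big_supported_point s (X g : basis -> C) b0 :
  uniq s -> supported X s -> (forall b, b != b0 -> X b * g b = 0) ->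
  \sum_(b <- s) X b * g b = X b0 * g b0.
Proof.
move=> us cov Xg0; rewrite (big_uniq_point us Xg0); case: ifPn => // b0s.
by have [->|/cov] := eqVneq (X b0) 0; rewrite ?mul0r // (negbTE b0s).
Qed.

Lemma sum_elt_mem (x : elt C) (g : basis -> C) s :
  uniq s -> (forall t, t \in x -> t.2 \in s) ->
  \sum_(t <- x) t.1 * g t.2 = \sum_(b <- s) coef x b * g b.
Proof.
move=> us; elim: x => [|[a b'] x IH] xs.
  by rewrite big_nil big1 // => b _; rewrite coef_elt_nil mul0r.
rewrite big_cons IH; last by move=> t tx; apply: xs; rewrite in_cons tx orbT.
under [RHS]eq_bigr => b _ do rewrite coef_elt_cons mulrDl.
rewrite big_split /= [X in _ = X + _](big_uniq_point us (t0 := b')); last first.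
  by move=> b; rewrite eq_sym => /negbTE ->; rewrite mul0r.
by rewrite (xs (a, b') (mem_head _ _)) eqxx.
Qed.

Lemma sum_elt_supported (x : elt C) (g : basis -> C) s :
  uniq s -> supported (coef x) s ->
  \sum_(t <- x) t.1 * g t.2 = \sum_(b <- s) coef x b * g b.
Proof.
move=> us cov; pose S := undup (s ++ map snd x).
rewrite (@sum_elt_mem x g S (undup_uniq _)); last first.
  by move=> t tx; rewrite mem_undup mem_cat map_f ?orbT.
rewrite (bigID (mem s)) /= [X in _ + X]big1 ?addr0; last first.
  by move=> b bs; have [->|/cov] := eqVneq (coef x b) 0; rewrite ?mul0r // (negbTE bs).
rewrite -big_filter; apply/perm_big/uniq_perm => //.
  by rewrite filter_uniq // undup_uniq.
by move=> b; rewrite mem_filter mem_undup mem_cat; case: (b \in s).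
Qed.

Lemma coef_ext_supported f (x : elt C) s b : uniq s -> supported (coef x) s ->
  coef (ext f x) b = \sum_(c <- s) coef x c * coef (f c) b.
Proof. by move=> us cov; rewrite coef_ext (sum_elt_supported (fun c => coef (f c) b) us cov). Qed.

Lemma supported_supp_catl x x' : supported (coef x) (undup (supp x ++ supp x')).
Proof. by move=> c /supported_supp cx; rewrite mem_undup mem_cat cx. Qed.

Lemma supported_supp_catr x x' : supported (coef x') (undup (supp x ++ supp x')).
Proof. by move=> c /supported_supp cx; rewrite mem_undup mem_cat cx orbT. Qed.

Lemma eq_coef_ext f (x x' : elt C) : coef x =1 coef x' -> coef (ext f x) =1 coef (ext f x').
Proof.
move=> xx' b; have us := undup_uniq (supp x ++ supp x').
rewrite (coef_ext_supported f b us (@supported_supp_catl x x')).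
rewrite (coef_ext_supported f b us (@supported_supp_catr x x')).
by apply: eq_bigr => c _; rewrite xx'.
Qed.

Lemma coef_brx_supported half (lam : C) (x y : elt C) s s' b :
  uniq s -> supported (coef x) s -> uniq s' -> supported (coef y) s' ->
  coef (brx half lam x y) b =
  \sum_(c <- s) coef x c * \sum_(c' <- s') coef y c' * coef (br half lam c c') b.
Proof.
move=> us cov us' cov'; rewrite coef_brx.
pose g c := \sum_(c' <- s') coef y c' * coef (br half lam c c') b.
transitivity (\sum_(t <- x) t.1 * g t.2); last exact: sum_elt_supported.
apply: eq_bigr => t _.
transitivity (t.1 * \sum_(u <- y) u.1 * coef (br half lam t.2 u.2) b).
  by rewrite mulr_sumr; apply: eq_bigr => u _; rewrite mulrA.
by rewrite (sum_elt_supported (fun c' => coef (br half lam t.2 c') b) us' cov').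
Qed.

Lemma eq_coef_brx half (lam : C) (x x' y y' : elt C) :
  coef x =1 coef x' -> coef y =1 coef y' ->
  coef (brx half lam x y) =1 coef (brx half lam x' y').
Proof.
move=> xx' yy' b.
have us := undup_uniq (supp x ++ supp x'); have us' := undup_uniq (supp y ++ supp y').
rewrite (coef_brx_supported half lam b us (@supported_supp_catl x x') us' (@supported_supp_catl y y')).
rewrite (coef_brx_supported half lam b us (@supported_supp_catr x x') us' (@supported_supp_catr y y')).
apply: eq_bigr => c _; rewrite xx'; congr (_ * _).
by apply: eq_bigr => c' _; rewrite yy'.
Qed.

Lemma coef_ext1 f (a : C) b B : coef (ext f [:: (a, b)]) B = a * coef (f b) B.
Proof. by rewrite coef_ext big_seq1. Qed.

Lemma coef_ext_id f (x : elt C) :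
  (forall t, t \in x -> coef (f t.2) =1 coef [:: (1, t.2)]) -> coef (ext f x) =1 coef x.
Proof.
elim: x => [|[a b] x IH] fid B; first by rewrite coef_ext !big_nil.
have -> : ext f ((a, b) :: x) = scale a (f b) ++ ext f x by [].
rewrite coef_elt_cat coef_scale IH => [|t tx]; last by apply: fid; rewrite in_cons tx orbT.
rewrite (fid (a, b)) ?mem_head // !coef_elt_cons coef_elt_nil addr0.
by case: ifP; rewrite ?mulr1 ?mulr0.
Qed.

End Coefficients.

Section Brackets.
Variables (C : numClosedFieldType) (half : bool) (lam : C).
Implicit Types x y : elt C.

Local Notation brx := (brx half lam).

Definition br_Lcoef (c c' : basis) (N : int) : C :=
  match c, c' with bL a, bL b => if a + b == N then (a - b)%:~R else 0 | _, _ => 0 end.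

Definition br_Icoef (c c' : basis) (N : int) : C :=
  match c, c' with
  | bL a, bI b => if a + b == N then (a - b)%:~R else 0
  | bI b, bL a => if a + b == N then - (a - b)%:~R else 0
  | bG p, bG q => if p + q + sI half == N then 1 else 0
  | _, _ => 0
  end.

Lemma coef_br_bL c c' N : coef (br half lam c c') (bL N) = br_Lcoef c c' N.
Proof.
by case: c => a; case: c' => b;
  rewrite /br /br_Lcoef ?coef_elt_cons ?coef_elt_nil ?eq_bL ?eq_bI /= ?addr0 //; case: ifP; rewrite ?addr0.
Qed.

Lemma coef_br_bI c c' N : coef (br half lam c c') (bI N) = br_Icoef c c' N.
Proof.
by case: c => a; case: c' => b;
  rewrite /br /br_Icoef ?coef_elt_cons ?coef_elt_nil ?eq_bL ?eq_bI /= ?addr0 //;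
  case: ifP; rewrite ?addr0 // addrC.
Qed.

Lemma coef_brx_supp x y B :
  coef (brx x y) B =
  \sum_(c <- supp x) coef x c * \sum_(c' <- supp y) coef y c' * coef (br half lam c c') B.
Proof. exact: coef_brx_supported (undup_uniq _) (@supported_supp _ x) (undup_uniq _) (@supported_supp _ y). Qed.

Definition Ldegrees x := [seq (if b is bL a then a else 0) | b <- supp x].

Lemma mem_Ldegrees x a : coef x (bL a) != 0 -> a \in Ldegrees x.
Proof. by move/supported_supp => xa; apply/mapP; exists (bL a). Qed.

Lemma coef_bL_eq0_or_exists x :
  (forall a, coef x (bL a) = 0) \/ exists a, coef x (bL a) != 0.
Proof.
have [/hasP[a _ xa]|/hasPn noL] := boolP (has (fun a => coef x (bL a) != 0) (Ldegrees x)).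
  by right; exists a.
left=> a; apply/eqP; apply: contraT => xa.
by have := noL a (mem_Ldegrees xa); rewrite xa.
Qed.

Definition Idegrees x := [seq (if b is bI a then a else 0) | b <- supp x].

Lemma mem_Idegrees x a : coef x (bI a) != 0 -> a \in Idegrees x.
Proof. by move/supported_supp => xa; apply/mapP; exists (bI a). Qed.

Definition even_elt x := forall b, parity b -> coef x b = 0.

Lemma sum_br_Lcoef_bL y a N :
  \sum_(c' <- supp y) coef y c' * br_Lcoef (bL a) c' N =
  coef y (bL (N - a)) * (a - (N - a))%:~R.
Proof.
rewrite (@big_supported_point _ _ _ _ (bL (N - a)) (undup_uniq _) (@supported_supp _ y)).
  by rewrite /br_Lcoef (addrC a) subrK eqxx.
case=> b; rewrite ?eq_bL /br_Lcoef ?mulr0 // => bNa.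
by case: ifP; rewrite ?mulr0 // => /eqP abN; rewrite -abN addrC addKr eqxx in bNa.
Qed.

Lemma sum_br_Icoef_bL y a N :
  \sum_(c' <- supp y) coef y c' * br_Icoef (bL a) c' N =
  coef y (bI (N - a)) * (a - (N - a))%:~R.
Proof.
rewrite (@big_supported_point _ _ _ _ (bI (N - a)) (undup_uniq _) (@supported_supp _ y)).
  by rewrite /br_Icoef (addrC a) subrK eqxx.
case=> b; rewrite ?eq_bI /br_Icoef ?mulr0 // => bNa.
by case: ifP; rewrite ?mulr0 // => /eqP abN; rewrite -abN addrC addKr eqxx in bNa.
Qed.

Lemma sum_br_Icoef_bI y a N :
  \sum_(c' <- supp y) coef y c' * br_Icoef (bI a) c' N =
  coef y (bL (N - a)) * - ((N - a) - a)%:~R.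
Proof.
rewrite (@big_supported_point _ _ _ _ (bL (N - a)) (undup_uniq _) (@supported_supp _ y)).
  by rewrite /br_Icoef subrK eqxx.
case=> b; rewrite ?eq_bL /br_Icoef ?mulr0 // => bNa.
by case: ifP; rewrite ?mulr0 // => /eqP abN; rewrite -abN addrK eqxx in bNa.
Qed.

Lemma coef_brx_bL_conc x y a0 N : (forall a, a != a0 -> coef x (bL a) = 0) ->
  coef (brx x y) (bL N) = coef x (bL a0) * coef y (bL (N - a0)) * (a0 - (N - a0))%:~R.
Proof.
move=> x_a0; rewrite coef_brx_supp.
under eq_bigr => c _ do under eq_bigr => c' _ do rewrite coef_br_bL.
rewrite (@big_supported_point _ _ _ _ (bL a0) (undup_uniq _) (@supported_supp _ x)).
  by rewrite sum_br_Lcoef_bL mulrA.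
case=> a; rewrite ?eq_bL => ha; first by rewrite x_a0 ?mul0r.
all: by rewrite big1 ?mulr0 // => c' _; case: c' => ?; rewrite mulr0.
Qed.

Lemma coef_brx_bL_top x y (r k j : int) : (r = 1 \/ r = -1) ->
  (forall a, r * k < r * a -> coef x (bL a) = 0) ->
  (forall a, r * j < r * a -> coef y (bL a) = 0) ->
  coef (brx x y) (bL (k + j)) = coef x (bL k) * coef y (bL j) * (k - j)%:~R.
Proof.
move=> r_sign x_top y_top; rewrite coef_brx_supp.
under eq_bigr => c _ do under eq_bigr => c' _ do rewrite coef_br_bL.
rewrite (@big_supported_point _ _ _ _ (bL k) (undup_uniq _) (@supported_supp _ x)).
  by rewrite sum_br_Lcoef_bL (addrC k) addrK mulrA.
case=> a; rewrite ?eq_bL => ak; last 3 first.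
1-3: by rewrite big1 ?mulr0 // => c' _; case: c' => ?; rewrite mulr0.
have [->|xa] := eqVneq (coef x (bL a)) 0; first by rewrite mul0r.
have lt_ak : r * a < r * k.
  rewrite lt_neqAle leNgt; apply/andP; split; last by apply: contra xa => /x_top ->.
  by case: r_sign ak => -> ak; rewrite ?mul1r ?mulN1r ?eqr_opp // eq_sym.
rewrite sum_br_Lcoef_bL y_top ?mul0r ?mulr0 //.
by case: r_sign lt_ak => ->; rewrite ?mul1r ?mulN1r; lia.
Qed.

Lemma exists_top_Ldegree x (r a : int) : coef x (bL a) != 0 ->
  exists k, [/\ coef x (bL k) != 0, r * a <= r * k &
                forall a', r * k < r * a' -> coef x (bL a') = 0].
Proof.
move=> xa; have has_x : has (fun j => coef x (bL j) != 0) (Ldegrees x).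
  by apply/hasP; exists a => //; exact: mem_Ldegrees.
have [k xk k_max] := exists_argmax_seq (fun j => r * j) has_x.
exists k; split => //; first exact: k_max (mem_Ldegrees xa) xa.
move=> a' lt; apply/eqP; apply: contraTT lt => xa'; rewrite -leNgt.
exact: k_max (mem_Ldegrees xa') xa'.
Qed.

Lemma brx_eigen_bL_bounded x y (c0 : C) (r k : int) : (r = 1 \/ r = -1) ->
  0 < r * k -> coef x (bL k) != 0 -> (forall a, r * k < r * a -> coef x (bL a) = 0) ->
  (forall N, coef (brx x y) (bL N) = c0 * coef y (bL N)) ->
  forall j, r * k < r * j -> coef y (bL j) = 0.
Proof.
move=> r_sign rk_gt0 xk x_top eig j kj; apply/eqP; apply: contraT => yj.
have [j0 [yj0 le_jj0 y_top]] := exists_top_Ldegree r yj.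
have := eig (k + j0).
rewrite (coef_brx_bL_top r_sign x_top y_top) [coef y (bL (k + j0))]y_top; last first.
  by case: r_sign rk_gt0 => ->; rewrite ?mul1r ?mulN1r; lia.
rewrite mulr0 => /eqP; rewrite !mulf_eq0 (negbTE xk) (negbTE yj0) intr_eq0 subr_eq0.
by move=> /eqP kj0; rewrite -kj0 leNgt kj in le_jj0.
Qed.

Lemma coef_brx_bI_conc x y a0 b0 N : even_elt x ->
  (forall a, a != a0 -> coef x (bL a) = 0) -> (forall a, a != b0 -> coef y (bL a) = 0) ->
  coef (brx x y) (bI N) =
    coef x (bL a0) * coef y (bI (N - a0)) * (a0 - (N - a0))%:~R
    - coef x (bI (N - b0)) * coef y (bL b0) * (b0 - (N - b0))%:~R.
Proof.
move=> ev_x x_a0 y_b0; rewrite coef_brx_supp.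
under eq_bigr => c _ do under eq_bigr => c' _ do rewrite coef_br_bI.
pose g c := \sum_(c' <- supp y) coef y c' * br_Icoef c c' N.
pose gL c := if c is bL _ then g c else 0.
pose gI c := if c is bI _ then g c else 0.
transitivity (\sum_(c <- supp x) coef x c * gL c + \sum_(c <- supp x) coef x c * gI c).
  rewrite -big_split; apply: eq_bigr => -[a|a|a|a] _ /=;
    by rewrite ?mulr0 ?addr0 ?add0r // ev_x ?mul0r.
rewrite (@big_supported_point _ _ _ gL (bL a0) (undup_uniq _) (@supported_supp _ x)); last first.
  by case=> a; rewrite /gL /= ?mulr0 // eq_bL => /x_a0 ->; rewrite mul0r.
rewrite (@big_supported_point _ _ _ gI (bI (N - b0)) (undup_uniq _) (@supported_supp _ x)).
  have NNb : N - (N - b0) = b0 by rewrite opprB addrC subrK.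
  by rewrite /gL /gI /g sum_br_Icoef_bL sum_br_Icoef_bI NNb !mulrN !mulrA.
case=> a; rewrite /gI /= ?mulr0 // eq_bI => ha.
rewrite /g sum_br_Icoef_bI y_b0 ?mul0r ?mulr0 //.
by apply: contraNneq ha => <-; rewrite opprB addrC subrK.
Qed.

Lemma coef_expadI_bI (c : C) k j : coef (expadI half lam c k (bI j)) =1 coef [:: (1, bI j)].
Proof. by move=> B; rewrite /expadI /br /scale /= !coef_elt_cons coef_elt_nil. Qed.

Lemma coef_expadI_bL (c : C) k m :
  coef (expadI half lam c k (bL m)) =1 coef [:: (1, bL m); (c * (k - m)%:~R, bI (m + k))].
Proof.
move=> B; rewrite /expadI /br /scale /= !coef_elt_cons coef_elt_nil.
by rewrite -intrN opprB.
Qed.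

Lemma coef_Iact_bI tau m : coef (Iact half lam tau [:: (1, bI m)]) =1 coef [:: (1, bI m)].
Proof.
elim: tau => [//|[c k] tau IH] B; rewrite /= (eq_coef_ext _ IH).
by rewrite coef_ext1 mul1r coef_expadI_bI.
Qed.

Lemma coef_Iact_bL tau m :
  coef (Iact half lam tau [:: (1, bL m)]) =1
  coef ((1, bL m) :: [seq (t.1 * (t.2 - m)%:~R, bI (m + t.2)) | t <- tau]).
Proof.
elim: tau => [//|[c k] tau IH] B; rewrite /= (eq_coef_ext _ IH).
set l := map _ tau.
have -> : ext (expadI half lam c k) ((1, bL m) :: l) =
          scale 1 (expadI half lam c k (bL m)) ++ ext (expadI half lam c k) l by [].
rewrite coef_elt_cat coef_scale mul1r coef_expadI_bL coef_ext_id; last first.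
  by move=> t /mapP[u _ ->]; exact: coef_expadI_bI.
by rewrite !coef_elt_cons coef_elt_nil addr0 addrA.
Qed.

End Brackets.

Section Automorphism.
Variables (C : numClosedFieldType) (half : bool) (lam : C) (sig : basis -> elt C).
Hypothesis sig_aut : is_aut half lam sig.

Local Notation F b := (coef (sig b)).
Local Notation brx := (brx half lam).

Lemma coef_sig_parity b B : parity B != parity b -> F b B = 0.
Proof.
case: sig_aut => sig_par _ _ _; apply: contraNeq => /sig_par ->; exact: eqxx.
Qed.

Lemma even_sig b : parity b = false -> even_elt (sig b).
Proof. by move=> even_b B odd_B; rewrite coef_sig_parity // odd_B even_b. Qed.

Lemma coef_sig_br b b' B : coef (ext sig (br half lam b b')) B = coef (brx (sig b) (sig b')) B.
Proof.
case: sig_aut => _ sig_br _ _.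
have br_unit : coef (brx [:: (1, b)] [:: (1, b')]) =1 coef (br half lam b b').
  move=> B'; rewrite /brx /= cats0.
  by elim: (br half lam b b') => [//|[a c] l IH]; rewrite /= !coef_elt_cons IH !mul1r.
have sig_unit c : coef (ext sig [:: (1, c)]) =1 coef (sig c).
  by move=> B'; rewrite coef_ext1 mul1r.
rewrite -(eq_coef_ext sig br_unit) sig_br.
exact: (eq_coef_brx half lam (sig_unit b) (sig_unit b') B).
Qed.

Lemma sig_neq0 b : ~ (forall B, F b B = 0).
Proof.
move=> sig0; case: sig_aut => _ _ sig_inj _.
have sig_b0 : coef (ext sig [:: (1, b)]) =1 coef (ext sig [::]).
  by move=> B; rewrite coef_ext1 sig0 mulr0 coef_elt_nil.
have := sig_inj _ _ sig_b0 b.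
by rewrite coef_elt_cons eqxx coef_elt_nil addr0 => /eqP; rewrite oner_eq0.
Qed.

Lemma coef_sig_bI_bL n j : F (bI n) (bL j) = 0.
Proof.
have := coef_sig_br (bG (n - sI half)) (bG 0) (bL j).
rewrite /= coef_ext1 mul1r addr0 subrK => ->.
by rewrite (@coef_brx_bL_conc _ half lam _ _ 0) => [|a _]; rewrite coef_sig_parity ?mul0r.
Qed.

Lemma exists_sig_bL_coef j : exists m, F (bL m) (bL j) != 0.
Proof.
case: sig_aut => _ _ _ sig_surj; have [x hx] := sig_surj [:: (1, bL j)].
have /sum_neq0_exists[c _] : \sum_(c <- supp x) coef x c * F c (bL j) != 0.
  rewrite -(coef_ext_supported sig _ (undup_uniq _) (@supported_supp _ x)) hx.
  by rewrite coef_elt_cons eqxx coef_elt_nil addr0 oner_eq0.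
rewrite mulf_eq0 negb_or => /andP[_]; case: c => m Fm; first by exists m.
- by rewrite coef_sig_bI_bL eqxx in Fm.
- by rewrite coef_sig_parity ?eqxx in Fm.
- by rewrite coef_sig_parity ?eqxx in Fm.
Qed.

Lemma coef_brx_sigL0_bL m B : coef (brx (sig (bL 0)) (sig (bL m))) B = (- m)%:~R * F (bL m) B.
Proof. by rewrite -coef_sig_br /= coef_ext1 sub0r add0r. Qed.

Lemma coef_brx_sigL0_bI m B : coef (brx (sig (bL 0)) (sig (bI m))) B = (- m)%:~R * F (bI m) B.
Proof. by rewrite -coef_sig_br /= coef_ext1 sub0r add0r. Qed.

Lemma coef_sig_L0_bL a : a != 0 -> F (bL 0) (bL a) = 0.
Proof.
move=> a_neq0; apply/eqP; apply: contraT => xa.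
(* An extreme L-degree k of sigma(L_0) in the direction r of a would bound the
   L-degrees of every sigma(L_m), so L_(k + r) would not be in the image. *)
pose r : int := if 0 < a then 1 else -1.
have r_sign : r = 1 \/ r = -1 by rewrite /r; case: ifP; [left|right].
have [k [xk le_ak x_top]] := exists_top_Ldegree r xa.
have rk_gt0 : 0 < r * k.
  by apply: lt_le_trans le_ak; rewrite /r; case: ifP; rewrite ?mul1r ?mulN1r; lia.
have sig_top m : forall j, r * k < r * j -> F (bL m) (bL j) = 0.
  exact: brx_eigen_bL_bounded r_sign rk_gt0 xk x_top (fun N => coef_brx_sigL0_bL m (bL N)).
have [m] := exists_sig_bL_coef (k + r); rewrite sig_top ?eqxx //.
by case: r_sign => ->; rewrite ?mul1r ?mulN1r; lia.
Qed.

Lemma sig_bL_hasL m : exists j, F (bL m) (bL j) != 0.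
Proof.
have [sig_noL|//] := coef_bL_eq0_or_exists (sig (bL m)).
exfalso; apply: (@sig_neq0 (bI (m + (m - 1)))); case=> N.
- exact: coef_sig_bI_bL.
- have := coef_sig_br (bL m) (bI (m - 1)) (bI N).
  rewrite /= coef_ext1 opprB addrC subrK mul1r => ->.
  rewrite (@coef_brx_bI_conc _ half lam _ _ 0 0 N (@even_sig (bL m) erefl)) => [|a _|a _].
  + by rewrite sig_noL coef_sig_bI_bL mulr0 !mul0r subrr.
  + exact: sig_noL.
  + exact: coef_sig_bI_bL.
- exact: coef_sig_parity.
- exact: coef_sig_parity.
Qed.

Lemma coef_sig_bL_degree m j :
  F (bL m) (bL j) != 0 -> F (bL 0) (bL 0) * j%:~R = m%:~R.
Proof.
move=> Fmj; apply: (eigen_eq_cancel Fmj).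
rewrite -(coef_brx_sigL0_bL m (bL j)) (@coef_brx_bL_conc _ half lam _ _ 0) => [|a].
  by rewrite !subr0 sub0r.
exact: coef_sig_L0_bL.
Qed.

Lemma sig_L0_sign : exists2 eps : int, eps = 1 \/ eps = -1 &
  F (bL 0) (bL 0) = eps%:~R /\ forall m j, F (bL m) (bL j) != 0 -> j = eps * m.
Proof.
have [m Fm1] := exists_sig_bL_coef 1.
have u_m : F (bL 0) (bL 0) = m%:~R by rewrite -(coef_sig_bL_degree Fm1) mulr1.
have [j F1j] := sig_bL_hasL 1.
have /eqP : (m * j)%:~R = 1 :> C by rewrite intrM -u_m (coef_sig_bL_degree F1j).
rewrite -[1]/(1%:~R) eqr_int => /eqP mj.
have m_sign : m = 1 \/ m = -1.
  have /intUnitRing.unitzPl : j * m = 1 by rewrite mulrC.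
  by rewrite qualifE => /orP[] /eqP; [left|right].
exists m => //; split=> // m' j' /coef_sig_bL_degree.
rewrite u_m -intrM => /eqP; rewrite eqr_int => /eqP <-.
by case: m_sign => ->; lia.
Qed.

Section Sign.
Variable eps : int.
Hypothesis eps_sign : eps = 1 \/ eps = -1.
Hypothesis sig_L0_L0 : F (bL 0) (bL 0) = eps%:~R.
Hypothesis sig_bL_diag : forall m j, F (bL m) (bL j) != 0 -> j = eps * m.

Lemma epsK : eps * eps = 1.
Proof. by case: eps_sign => ->. Qed.

Lemma epsK_C (x : C) : eps%:~R * (eps%:~R * x) = x.
Proof. by rewrite mulrA -intrM epsK mul1r. Qed.

Lemma coef_sig_bL_bL m j : j != eps * m -> F (bL m) (bL j) = 0.
Proof. by move=> j_off; apply/eqP; apply: contraNT j_off => /sig_bL_diag ->. Qed.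

Lemma coef_sig_bI_bI n N : N != eps * n -> F (bI n) (bI N) = 0.
Proof.
move=> N_off; apply/eqP; apply: contraNT N_off => FnN.
have : eps%:~R * N%:~R = n%:~R :> C.
  apply: (eigen_eq_cancel FnN); rewrite -(coef_brx_sigL0_bI n (bI N)).
  rewrite (@coef_brx_bI_conc _ half lam _ _ 0 0 N (@even_sig (bL 0) erefl)) => [|a|a _];
    [|exact: coef_sig_L0_bL|exact: coef_sig_bI_bL].
  by rewrite coef_sig_bI_bL sig_L0_L0 !subr0 sub0r mulr0 mul0r subr0.
by rewrite -intrM => /eqP; rewrite eqr_int => /eqP <-; rewrite mulrA epsK mul1r.
Qed.

Definition coefLL m := F (bL m) (bL (eps * m)).
Definition coefII n := F (bI n) (bI (eps * n)).
(* Indexed by M for the I_(eps M)-component, so that eps drops out of the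
   relations between these coefficients. *)
Definition coefLI m M := F (bL m) (bI (eps * M)).

Lemma eps_neq0 : eps%:~R != 0 :> C.
Proof. by case: eps_sign => ->; rewrite ?oppr_eq0 oner_eq0. Qed.

Lemma coefLL_neq0 m : coefLL m != 0.
Proof.
have [j Fmj] := sig_bL_hasL m; apply: contraNneq Fmj => Lm0; apply/eqP.
by have [->|j_off] := eqVneq j (eps * m); [exact: Lm0 | exact: coef_sig_bL_bL].
Qed.

Lemma coefII_neq0 n : coefII n != 0.
Proof.
apply/eqP => In0; apply: (@sig_neq0 (bI n)); case=> a.
- exact: coef_sig_bI_bL.
- by have [->|a_off] := eqVneq a (eps * n); [exact: In0 | exact: coef_sig_bI_bI].
- exact: coef_sig_parity.
- exact: coef_sig_parity.
Qed.

Lemma coefLL_add m n : m != n ->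
  eps%:~R * coefLL (m + n) = eps%:~R * coefLL m * (eps%:~R * coefLL n).
Proof.
move=> mn; have mn_neq0 : (m - n)%:~R != 0 :> C by rewrite intr_eq0 subr_eq0.
have := coef_sig_br (bL m) (bL n) (bL (eps * (m + n))); rewrite /= coef_ext1.
rewrite (@coef_brx_bL_conc _ half lam _ _ (eps * m)) => [|a]; last exact: coef_sig_bL_bL.
rewrite mulrDr addrAC subrr add0r -mulrDr -mulrBr intrM -/(coefLL m) -/(coefLL n) => E.
have -> : coefLL (m + n) = eps%:~R * coefLL m * coefLL n.
  by apply: (mulfI mn_neq0); rewrite [LHS]E; ring.
by ring.
Qed.

Definition alpha := eps%:~R * coefLL 1.

Lemma coefLL_expz m : coefLL m = eps%:~R * alpha ^ m.
Proof.
rewrite -(@mul_offdiag_expz _ (fun m => eps%:~R * coefLL m)) => [||k].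
- by rewrite epsK_C.
- exact: coefLL_add.
- by rewrite mulf_neq0 ?eps_neq0 ?coefLL_neq0.
Qed.

Lemma alpha_neq0 : alpha != 0.
Proof. by rewrite mulf_neq0 ?eps_neq0 ?coefLL_neq0. Qed.

Lemma coefII_expz k : coefII k = alpha ^ k * coefII 0.
Proof.
have [->|k_neq0] := eqVneq k 0; first by rewrite expr0z mul1r.
have k_neq0C : k%:~R != 0 :> C by rewrite intr_eq0.
have := coef_sig_br (bL k) (bI 0) (bI (eps * k)); rewrite /= coef_ext1 subr0.
rewrite (@coef_brx_bI_conc _ half lam _ _ (eps * k) 0 _ (@even_sig (bL k) erefl)) => [|a|a _];
  [|exact: coef_sig_bL_bL|exact: coef_sig_bI_bL].
rewrite coef_sig_bI_bL subrr !subr0 mulr0 mul0r subr0 -/(coefLL k) coefLL_expz => E.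
have coefII0 : coefII 0 = F (bI 0) (bI 0) by rewrite /coefII mulr0.
apply: (mulfI k_neq0C); rewrite [LHS]E coefII0 intrM -[RHS]epsK_C.
by ring.
Qed.

Lemma coefLI_add m n M :
  (m - n)%:~R * coefLI (m + n) M =
  alpha ^ m * (2 * m - M)%:~R * coefLI n (M - m) - alpha ^ n * (2 * n - M)%:~R * coefLI m (M - n).
Proof.
have := coef_sig_br (bL m) (bL n) (bI (eps * M)); rewrite /= coef_ext1 => ->.
rewrite (@coef_brx_bI_conc _ half lam _ _ (eps * m) (eps * n) _ (@even_sig (bL m) erefl))
  => [|a|a]; [|exact: coef_sig_bL_bL|exact: coef_sig_bL_bL].
have shift k : eps * M - eps * k = eps * (M - k) by rewrite mulrBr.
have dist k : eps * k - eps * (M - k) = eps * (2 * k - M) by rewrite -mulrBr; congr (_ * _); ring.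
rewrite !shift !dist -/(coefLL m) -/(coefLL n) -/(coefLI n (M - m)) -/(coefLI m (M - n)).
by rewrite !coefLL_expz !intrM -[RHS]epsK_C; ring.
Qed.

Lemma coefLI_shift m k : k%:~R * coefLI m (m + k) = alpha ^ m * (k - m)%:~R * coefLI 0 k.
Proof.
have := coefLI_add m 0 (m + k).
rewrite subr0 addr0 expr0z mul1r addrAC subrr add0r mulr0 sub0r => E.
have -> : k%:~R * coefLI m (m + k) =
          (m + k)%:~R * coefLI m (m + k) - m%:~R * coefLI m (m + k) by ring.
by rewrite E; ring.
Qed.

Lemma coefLI_diag_add m n : m != n ->
  coefLI (m + n) (m + n) = alpha ^ m * coefLI n n + alpha ^ n * coefLI m m.
Proof.
move=> mn; have mn_neq0 : (m - n)%:~R != 0 :> C by rewrite intr_eq0 subr_eq0.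
apply: (mulfI mn_neq0); rewrite coefLI_add addrK (addrC m n) addrK.
by ring.
Qed.

Definition beta := coefLI 1 1 / alpha.

Lemma coefLI_diag m : coefLI m m = m%:~R * alpha ^ m * beta.
Proof.
have alphaX_neq0 k : alpha ^ k != 0 by rewrite expfz_neq0 ?alpha_neq0.
have := @add_offdiag_linear _ (fun k => coefLI k k / alpha ^ k) _ m.
rewrite expr1z -/beta mulrAC => <-; first by rewrite divfK.
move=> k l kl /=; rewrite coefLI_diag_add // expfzDr ?alpha_neq0 //.
by field; rewrite !alphaX_neq0.
Qed.

Definition tau_support : seq int :=
  undup [seq k <- [seq eps * a | a <- Idegrees (sig (bL 0))] | k != 0].

(* exp(c ad I_k) adds c (k - m) I_(m+k) to L_m; by coefLI_shift this choice
   of c cancels the I_(eps (m+k))-component of sigma(L_m) for every m. *)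
Definition tau_coef k := - coefLI 0 k / (k%:~R * alpha ^ k * coefII 0).

Definition tau := [seq (tau_coef k, k) | k <- tau_support].

Lemma mem_tau_support k : k != 0 -> coefLI 0 k != 0 -> k \in tau_support.
Proof.
move=> k_neq0 /mem_Idegrees Ik; rewrite mem_undup mem_filter k_neq0.
by apply/mapP; exists (eps * k); rewrite // mulrA epsK mul1r.
Qed.

Lemma coef_sig_tau_bI m :
  coef (ext sig (Iact half lam tau [:: (1, bI m)])) =1 coef [:: (alpha ^ m * coefII 0, bI (eps * m))].
Proof.
move=> B; rewrite (eq_coef_ext _ (coef_Iact_bI half lam tau m)) coef_ext1 mul1r.
rewrite coef_elt_cons coef_elt_nil addr0; case: B => j /=.
- exact: coef_sig_bI_bL.
- rewrite eq_bI; have [<-|j_off] := eqVneq (eps * m) j; first exact: coefII_expz.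
  by rewrite coef_sig_bI_bI // eq_sym.
- exact: coef_sig_parity.
- exact: coef_sig_parity.
Qed.

Lemma coef_sig_tau_bL_bI m M :
  coef (ext sig (Iact half lam tau [:: (1, bL m)])) (bI (eps * M)) =
  if M == m then m%:~R * alpha ^ m * beta else 0.
Proof.
rewrite (eq_coef_ext _ (coef_Iact_bL half lam tau m)) coef_ext big_cons mul1r.
rewrite /tau !big_map /= -/(coefLI m M) (big_uniq_point (t0 := M - m) (undup_uniq _)); last first.
  move=> k k_off; rewrite coef_sig_bI_bI ?mulr0 //; apply: contra k_off => /eqP.
  move=> /(congr1 (fun j => eps * j)); rewrite !mulrA epsK !mul1r => ->.
  by rewrite addrAC subrr add0r.
rewrite (addrC m) subrK -/(coefII M).
have [-> | M_off] := eqVneq M m.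
  rewrite subrr (negbTE (_ : 0 \notin tau_support)) ?addr0 ?coefLI_diag //.
  by rewrite mem_undup mem_filter eqxx.
have [k -> k_neq0] : exists2 k, M = m + k & k != 0.
  by exists (M - m); rewrite ?subr_eq0 // addrC subrK.
have -> : m + k - m = k by rewrite addrC addKr.
have k_neq0C : k%:~R != 0 :> C by rewrite intr_eq0.
case: ifP => k_supp.
  apply: (mulfI k_neq0C); rewrite mulr0 mulrDr coefLI_shift coefII_expz /tau_coef.
  rewrite expfzDr ?alpha_neq0 //; field.
  by rewrite k_neq0C coefII_neq0 expfz_neq0 ?alpha_neq0.
have coefLI0k : coefLI 0 k = 0.
  by apply/eqP; apply: contraFT k_supp => /(mem_tau_support k_neq0).
have /eqP := coefLI_shift m k; rewrite coefLI0k mulr0 mulf_eq0 (negbTE k_neq0C) /= => /eqP ->.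
by rewrite addr0.
Qed.

Lemma coef_sig_tau_bL m :
  coef (ext sig (Iact half lam tau [:: (1, bL m)])) =1
  coef [:: (eps%:~R * alpha ^ m, bL (eps * m)); (m%:~R * alpha ^ m * beta, bI (eps * m))].
Proof.
case=> j; rewrite !coef_elt_cons coef_elt_nil addr0 /=; last 2 first.
1-2: by rewrite (eq_coef_ext _ (coef_Iact_bL half lam tau m)) coef_ext big_cons big_map
       big1 => [|t _]; rewrite coef_sig_parity ?mulr0 ?addr0.
- rewrite (eq_coef_ext _ (coef_Iact_bL half lam tau m)) coef_ext big_cons mul1r /=.
  rewrite big_map big1 => [|t _]; last by rewrite coef_sig_bI_bL mulr0.
  rewrite eq_bL !addr0; have [<-|j_off] := eqVneq (eps * m) j; first exact: coefLL_expz.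
  by rewrite coef_sig_bL_bL // eq_sym.
- have -> : j = eps * (eps * j) by rewrite mulrA epsK mul1r.
  rewrite coef_sig_tau_bL_bI eq_bI add0r; congr (if _ then _ else _).
  by rewrite mulrA epsK mul1r; apply/eqP/eqP => [<-|<-]; rewrite // mulrA epsK mul1r.
Qed.

End Sign.

End Automorphism.

Theorem lemma3p2 (C : numClosedFieldType) (half : bool) (lam : C)
  (sig : basis -> elt C) :
  is_aut half lam sig ->
  exists (tau : seq (C * int)) (eps : int) (a mu beta : C),
    [/\ eps = 1 \/ eps = -1, a != 0, mu != 0 &
    forall m : int,
      coef (ext sig (Iact half lam tau [:: (1, bL m)])) =1
        coef [:: (eps%:~R * a ^ m, bL (eps * m)); (m%:~R * a ^ m * beta, bI (eps * m))]
      /\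
      coef (ext sig (Iact half lam tau [:: (1, bI m)])) =1
        coef [:: (a ^ m * mu, bI (eps * m))]].
Proof.
move=> sig_aut; have [eps eps_sign [sig_L0_L0 sig_bL_diag]] := sig_L0_sign sig_aut.
exists (tau sig eps), eps, (alpha sig eps), (coefII sig eps 0), (beta sig eps); split=> //.
- exact: (alpha_neq0 sig_aut eps_sign sig_bL_diag).
- exact: (coefII_neq0 sig_aut eps_sign sig_L0_L0).
- move=> m; split.
    exact: (coef_sig_tau_bL sig_aut eps_sign sig_L0_L0 sig_bL_diag).
  exact: (coef_sig_tau_bI sig_aut eps_sign sig_L0_L0 sig_bL_diag).
Qed.
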